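(* Let $G^{\mathcal X}_r=(V_r,E^{\mathcal X}_r,s_r)$ be an extraction order. An edge $e\in E^{\mathcal X}_r$ is labeled with $j\in V_r$ (i.e., $j\in\mathcal L_e$) if and only if there exists a node $i\in V_r$ such that (i) $e$ lies on a directed path from $i$ to $j$ in $E^{\mathcal X}_r$, i.e., $e\in E_{i\leadsto j}$, and (ii) a confluence from $i$ to $j$ exists.
   Context: An extraction order of a directed graph $G_r=(V_r,E_r)$ is a rooted directed acyclic graph $G^{\mathcal X}_r=(V_r,E^{\mathcal X}_r,s_r)$ in which every node is reachable from $s_r$ and $E^{\mathcal X}_r$ is obtained from $E_r$ by reversing some (possibly no) edges. A confluence from $i$ to $j$ is a pair of directed paths in $E^{\mathcal X}_r$ from $i$ to $j$ sharing no node other than $i$ and $j$; it contains the edges of both paths. For $e\in E^{\mathcal X}_r$, $\mathcal L_e$ is the set of nodes $j$ such that $e$ belongs to some confluence with target $j$. $E_{i\leadsto j}$ denotes the set of edges of $E^{\mathcal X}_r$ that lie on some directed path from $i$ to $j$. *)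

From mathcomp Require Import all_boot.
Set Implicit Arguments. Unset Strict Implicit. Unset Printing Implicit Defensive.

(* The original graph G_r = (V, E) is given by edges e : E with tail [srcr e]
   and head [tgtr e].  The extraction order E^X reverses the edges e with
   [rev e = true]. *)
Definition xsrc (V E : Type) (srcr tgtr : E -> V) (rev : E -> bool) (e : E) : V :=
  if rev e then tgtr e else srcr e.
Definition xtgt (V E : Type) (srcr tgtr : E -> V) (rev : E -> bool) (e : E) : V :=
  if rev e then srcr e else tgtr e.

Section Digraph.
Variables (V E : finType) (src tgt : E -> V).

Fixpoint is_walk (x : V) (p : seq E) (y : V) : bool :=
  if p is e :: p' then (src e == x) && is_walk (tgt e) p' y else x == y.

Definition is_dpath (x : V) (p : seq E) (y : V) : bool :=
  is_walk x p y && uniq (x :: map tgt p).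

Definition path_nodes (x : V) (p : seq E) : seq V := x :: map tgt p.

Definition dag_acyclic : Prop := forall x p, is_walk x p x -> p = [::].

Definition rooted_at (s : V) : Prop := forall v : V, exists p, is_walk s p v.

Definition confluence (i j : V) (p1 p2 : seq E) : Prop :=
  [/\ is_dpath i p1 j, is_dpath i p2 j, p1 != p2 &
      forall v, v \in path_nodes i p1 -> v \in path_nodes i p2 -> (v == i) || (v == j)].

Definition labeled_with (e : E) (j : V) : Prop :=
  exists i p1 p2, confluence i j p1 p2 /\ (e \in p1 ++ p2).

Definition on_path_between (e : E) (i j : V) : Prop :=
  exists p, is_dpath i p j /\ e \in p.

End Digraph.

Definition extraction_order (V E : finType) (srcr tgtr : E -> V) (rev : E -> bool)
    (s : V) : Prop :=
  dag_acyclic (xsrc srcr tgtr rev) (xtgt srcr tgtr rev) /\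
  rooted_at (xsrc srcr tgtr rev) (xtgt srcr tgtr rev) s.

From mathcomp Require Import all_boot.
Set Implicit Arguments. Unset Strict Implicit. Unset Printing Implicit Defensive.

(* Let e lie on a directed path p from i to j, and let (q1, q2) be a
   confluence from i to j whose edges do not contain e.  Around e, the path p
   leaves the node set C of q1 and q2 at a node a and first re-enters it at a
   node b.  If a and b lie on the same branch, say q1, rerouting q1 through
   this detour yields a confluence from i to j together with q2.  Otherwise
   a lies on q1 and b on q2 only; then the detour followed by q2 from b,
   together with q1 from a, is a confluence from a to j.  Acyclicity makes
   every walk built this way a directed path. *)

Section Walks.
Variables (V E : finType) (src tgt : E -> V).
Local Notation walk := (is_walk src tgt).
Local Notation nodes := (path_nodes tgt).

Lemma walk_cat x p z q y : walk x p z -> walk z q y -> walk x (p ++ q) y.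
Proof.
elim: p x => [|f p IH] x /=; first by move/eqP->.
by case/andP=> -> /IH Wp /Wp.
Qed.

Lemma walk_cat_inv x p q y : walk x (p ++ q) y -> exists2 z, walk x p z & walk z q y.
Proof.
elim: p x => [|f p IH] x /=; first by exists x; rewrite ?eqxx.
by case/andP=> /eqP-> /IH [z Wp Wq]; exists z; rewrite ?eqxx.
Qed.

Lemma walk_rcons x p f y : walk x (rcons p f) y = walk x p (src f) && (tgt f == y).
Proof. by elim: p x => [|g p IH] x /=; rewrite ?IH ?andbA // eq_sym. Qed.

Lemma nodes_cat x p q : nodes x (p ++ q) = nodes x p ++ map tgt q.
Proof. by rewrite /path_nodes map_cat. Qed.

Lemma walk_end_in_nodes x p y : walk x p y -> y \in nodes x p.
Proof.
elim: p x => [|f p IH] x /=; first by move/eqP->; rewrite mem_head.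
by case/andP=> _ /IH yp; rewrite in_cons yp orbT.
Qed.

Lemma walk_split_at x p y v : walk x p y -> v \in nodes x p ->
  exists p1 p2, [/\ p = p1 ++ p2, walk x p1 v & walk v p2 y].
Proof.
elim: p x => [|f p IH] x /=.
  by move=> /eqP-> /[!inE] /eqP->; exists [::], [::]; rewrite /= !eqxx.
case/andP=> /eqP fx Wp /[!inE] /orP [/eqP->|vp].
  by exists [::], (f :: p); rewrite /= fx eqxx Wp.
have [p1 [p2 [-> W1 W2]]] := IH _ Wp vp.
by exists (f :: p1), p2; rewrite /= fx eqxx W1 W2.
Qed.

Lemma walk_last_hit (C : pred V) x p z : C x -> walk x p z ->
  exists a q, [/\ C a, walk a q z & ~~ has C (map tgt q)].
Proof.
move=> Cx; elim/last_ind: p z => [|p f IH] z /=.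
  by move/eqP<-; exists x, [::]; rewrite /= eqxx.
rewrite walk_rcons => /andP [/IH [a [q [Ca Wq NCq]]] /eqP<-].
have [Cf|NCf] := boolP (C (tgt f)); first by exists (tgt f), [::]; rewrite /= eqxx.
exists a, (rcons q f); split; rewrite ?walk_rcons ?Wq ?eqxx //.
by rewrite map_rcons has_rcons negb_or NCf.
Qed.

Lemma walk_first_hit (C : pred V) z p y : C y -> walk z p y ->
  exists b q, [/\ C b, walk z q b & {in nodes z q, forall v, C v -> v = b}].
Proof.
move=> Cy; elim: p z => [|f p IH] z /=.
  by move/eqP->; exists y, [::]; split; rewrite /= ?eqxx // => v /[!inE] /eqP.
case/andP=> /eqP<- /IH [b [q [Cb Wq Hq]]].
have [Cf|NCf] := boolP (C (src f)).
  by exists (src f), [::]; split; rewrite /= ?eqxx // => v /[!inE] /eqP.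
exists b, (f :: q); split; rewrite /= ?eqxx //.
by move=> v /[!inE] /orP [/eqP-> /(negP NCf)|]; last exact: Hq.
Qed.

Lemma walk_bridge (C : pred V) x p y e : C x -> C y -> walk x p y -> e \in p ->
  exists a seg b, [/\ walk a seg b, e \in seg, C a, C b
                    & {in map tgt seg, forall v, C v -> v = b}].
Proof.
move=> Cx Cy W ep; case/splitPr: ep W => pa pb.
case/walk_cat_inv=> z Wa /= /andP [/eqP ez Wb].
have [a [q [Ca Wq NCq]]] := walk_last_hit Cx Wa.
have [b [r [Cb Wr Hr]]] := walk_first_hit Cy Wb.
exists a, (q ++ e :: r), b; split=> //.
- by apply: walk_cat Wq _; rewrite /= ez eqxx.
- by rewrite mem_cat mem_head orbT.
move=> v /[!(map_cat, mem_cat)] /orP [vq Cv|]; last exact: Hr.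
by case/hasP: NCq; exists v.
Qed.

Lemma confluence_sym i j p1 p2 :
  confluence src tgt i j p1 p2 -> confluence src tgt i j p2 p1.
Proof. by case=> D1 D2 N12 H; split=> // [|v v2 v1]; [rewrite eq_sym | exact: H]. Qed.

Lemma labeled_on_path_confluence e j : labeled_with src tgt e j ->
  exists i, on_path_between src tgt e i j /\ exists p1 p2, confluence src tgt i j p1 p2.
Proof.
case=> i [p1 [p2 [conf /[1!mem_cat] ep]]]; have [D1 D2 _ _] := conf.
exists i; split; last by exists p1, p2.
by case/orP: ep => ep; [exists p1 | exists p2].
Qed.

Hypothesis acyclic : dag_acyclic src tgt.

Lemma walk_uniq x p y : walk x p y -> uniq (nodes x p).
Proof.
elim: p x => [|f p IH] x //= /andP [/eqP fx Wp].
apply/andP; split; last exact: IH Wp.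
apply/negP => xp.
have [p1 [_ [_ W1 _]]] := walk_split_at Wp xp.
by have := @acyclic x (f :: p1); rewrite /= fx eqxx W1 => /(_ isT).
Qed.

Lemma walk_dpath x p y : walk x p y -> is_dpath src tgt x p y.
Proof. by move=> W; rewrite /is_dpath W (walk_uniq W). Qed.

Lemma labeled_of_walks i j P Q e : walk i P j -> walk i Q j -> e \in P -> e \notin Q ->
  (forall v, v \in nodes i P -> v \in nodes i Q -> (v == i) || (v == j)) ->
  labeled_with src tgt e j.
Proof.
move=> WP WQ eP eQ disj; exists i, P, Q; split; last by rewrite mem_cat eP.
split; [exact: walk_dpath | exact: walk_dpath | | exact: disj].
by apply: contraNneq eQ => <-.
Qed.

Lemma labeled_splice_inner i j q q' a seg b e :
  confluence src tgt i j q q' -> e \notin q' ->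
  walk a seg b -> e \in seg -> a \in nodes i q -> b \in nodes i q ->
  {in map tgt seg, forall v, v \in nodes i q' -> v = b} ->
  labeled_with src tgt e j.
Proof.
move=> [/andP [W _] /andP [W' _] _ disj] eNq' Ws es aq bq Hseg.
have [qa [qa' [Eqa Wa _]]] := walk_split_at W aq.
have [qb' [qb [Eqb _ Wb]]] := walk_split_at W bq.
apply: (labeled_of_walks (walk_cat Wa (walk_cat Ws Wb)) W' _ eNq').
  by rewrite !mem_cat es orbT.
move=> v /[!(nodes_cat, map_cat, mem_cat)] /or3P [vqa|vs|vqb] vq'; apply: disj (vq').
- by rewrite Eqa nodes_cat mem_cat vqa.
- by rewrite (Hseg v vs vq').
- by rewrite Eqb nodes_cat mem_cat vqb orbT.
Qed.

Lemma labeled_splice_outer i j q q' a seg b e :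
  confluence src tgt i j q q' -> e \notin q ->
  walk a seg b -> e \in seg -> a \in nodes i q -> b \in nodes i q' ->
  {in map tgt seg, forall v, v \notin nodes i q} ->
  labeled_with src tgt e j.
Proof.
move=> [/andP [W Uq] /andP [W' _] _ disj] eNq Ws es aq bq' Hseg.
have [qa [qa' [Eqa _ Wa']]] := walk_split_at W aq.
have [qb' [qb [Eqb _ Wb]]] := walk_split_at W' bq'.
apply: (labeled_of_walks (walk_cat Ws Wb) Wa').
- by rewrite mem_cat es.
- by apply: contra eNq; rewrite Eqa mem_cat orbC => ->.
(* Only j can be shared: i does not reappear on q after a. *)
move=> v vP vQ; have [//|va] := eqVneq v a.
have vq : v \in map tgt q.
  by move: vQ; rewrite inE (negbTE va) /= => vqa'; rewrite Eqa map_cat mem_cat vqa' orbT.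
have vi : v != i by apply: contraTneq vq => ->; case/andP: Uq.
have vnq : v \in nodes i q by rewrite inE vq orbT.
move: vP; rewrite nodes_cat mem_cat inE (negbTE va) /= => /orP [vs|vqb].
  by case/negP: (Hseg v vs).
have vq' : v \in nodes i q' by rewrite Eqb nodes_cat mem_cat vqb orbT.
by move: (disj v vnq vq'); rewrite (negbTE vi).
Qed.

Lemma labeled_of_bridge i j q1 q2 a seg b e :
  confluence src tgt i j q1 q2 -> e \notin q1 -> e \notin q2 ->
  walk a seg b -> e \in seg -> a \in nodes i q1 ->
  (b \in nodes i q1) || (b \in nodes i q2) ->
  {in map tgt seg, forall v, (v \in nodes i q1) || (v \in nodes i q2) -> v = b} ->
  labeled_with src tgt e j.
Proof.
move=> conf e1 e2 Ws es aq1 Cb Hseg.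
have [bq1|bq1] := boolP (b \in nodes i q1).
  apply: labeled_splice_inner conf e2 Ws es aq1 bq1 _ => v vs vq2.
  by apply: Hseg; rewrite ?vq2 ?orbT.
have bq2 : b \in nodes i q2 by move: Cb; rewrite (negbTE bq1).
apply: labeled_splice_outer conf e1 Ws es aq1 bq2 _ => v vs.
by apply: contra bq1 => vq1; rewrite -(Hseg v vs) ?vq1.
Qed.

Lemma labeled_of_path_confluence i j p e q1 q2 :
  walk i p j -> e \in p -> confluence src tgt i j q1 q2 -> labeled_with src tgt e j.
Proof.
move=> W ep conf; have [eq12|] := boolP (e \in q1 ++ q2); first by exists i, q1, q2.
rewrite mem_cat negb_or => /andP [e1 e2].
pose C : pred V := fun v => (v \in nodes i q1) || (v \in nodes i q2).
have Ci : C i by rewrite /C mem_head.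
have Cj : C j.
  by case: conf => /andP [W1 _] _ _ _; rewrite /C (walk_end_in_nodes W1).
have [a [seg [b [Ws es /orP [aq1|aq2] Cb Hseg]]]] := walk_bridge Ci Cj W ep.
  exact: labeled_of_bridge conf e1 e2 Ws es aq1 Cb Hseg.
apply: labeled_of_bridge (confluence_sym conf) e2 e1 Ws es aq2 _ _.
  by rewrite orbC.
by move=> v vs; rewrite orbC; apply: Hseg.
Qed.

End Walks.

Theorem lemma13 (V E : finType) (srcr tgtr : E -> V) (rev : E -> bool) (s : V) :
  extraction_order srcr tgtr rev s ->
  forall (e : E) (j : V),
    labeled_with (xsrc srcr tgtr rev) (xtgt srcr tgtr rev) e j <->
    exists i : V,
      on_path_between (xsrc srcr tgtr rev) (xtgt srcr tgtr rev) e i j /\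
      exists p1 p2, confluence (xsrc srcr tgtr rev) (xtgt srcr tgtr rev) i j p1 p2.
Proof.
case=> acyclic _ e j; split; first exact: labeled_on_path_confluence.
case=> i [[p [/andP [W _] ep]] [q1 [q2 conf]]].
exact: labeled_of_path_confluence W ep conf.
Qed.
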